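(* Assume the setting and the nsCRAIG recurrence described in the context, and let $k\ge1$ be such that $Q_k,B_k,H_k$ are defined. Then $H_k$ is nonsingular, and the vector $p^{(k)}=Q_ky_k$ with $y_k=-B_k^{-1}H_k^{-1}(\beta_1e_1)$ coincides with the $k$-th iterate of the full orthogonalization method (FOM), started from the zero initial guess and preconditioned with $N$, applied to the Schur-complement equation $Sp=-b$, $S=A^TM^{-1}A+C$; that is, $p^{(k)}$ is the unique $p\in\mathcal{K}_k:=\operatorname{span}\{N^{-1}b,(N^{-1}S)N^{-1}b,\dots,(N^{-1}S)^{k-1}N^{-1}b\}$ with $(-b-Sp)^Tx=0$ for all $x\in\mathcal{K}_k$. Moreover the nsCRAIG iterate $u^{(k)}$ satisfies $u^{(k)}=-M^{-1}Ap^{(k)}$.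
   Context: Setting: $M\in\mathbb{R}^{m\times m}$ is nonsymmetric and positive definite ($x^TMx>0$ for all $x\ne0$); $A\in\mathbb{R}^{m\times n}$ ($n\le m$) has full column rank; $C\in\mathbb{R}^{n\times n}$ is symmetric positive semidefinite; $b\in\mathbb{R}^n$ is nonzero; $N\in\mathbb{R}^{n\times n}$ is symmetric positive definite. Write $\|x\|_G=(x^TGx)^{1/2}$ for $G$ positive definite (for nonsymmetric $M$ this is the norm of its symmetric part). The generalized saddle point system is $Mu+Ap=0$, $A^Tu-Cp=b$, with unique solution $(u_*,p_* )$; $S=A^TM^{-1}A+C$. nsCRAIG recurrence (exact arithmetic): Initialization: $\beta_1=\|b\|_{N^{-1}}$, $q_1=N^{-1}b/\beta_1$, $Q_1=[q_1]$, $r_1=q_1$, $w_1=M^{-1}Aq_1$, $s_1=Cr_1$, $\alpha_1=(w_1^TMw_1+r_1^Ts_1)^{1/2}$, $v_1=w_1/\alpha_1$, $t_1=s_1/\alpha_1$, $\chi_1=\beta_1/\alpha_1$. For $k=1,2,\dots$: $\hat g_k=N^{-1}(A^Tv_k+t_k)$, $h_k=Q_k^TN\hat g_k\in\mathbb{R}^k$, $g_k=\hat g_k-Q_kh_k$, $\beta_{k+1}=\|g_k\|_N$; if $\beta_{k+1}=0$ the recurrence stops; otherwise $q_{k+1}=g_k/\beta_{k+1}$, $Q_{k+1}=[Q_k,q_{k+1}]$, $w_{k+1}=M^{-1}Aq_{k+1}-\beta_{k+1}v_k$, $r_{k+1}=q_{k+1}-(\beta_{k+1}/\alpha_k)r_k$,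 $s_{k+1}=Cr_{k+1}$, $\alpha_{k+1}=(w_{k+1}^TMw_{k+1}+r_{k+1}^Ts_{k+1})^{1/2}$, $v_{k+1}=w_{k+1}/\alpha_{k+1}$, $t_{k+1}=s_{k+1}/\alpha_{k+1}$, $\chi_{k+1}=-(\beta_{k+1}/\alpha_{k+1})\chi_k$. Matrices: $B_k\in\mathbb{R}^{k\times k}$ upper bidiagonal with $(B_k)_{ii}=\alpha_i$, $(B_k)_{i,i+1}=\beta_{i+1}$; $H_k\in\mathbb{R}^{k\times k}$ upper Hessenberg whose $j$-th column has entries $(H_k)_{ij}=(h_j)_i$ for $i\le j$, $(H_k)_{j+1,j}=\beta_{j+1}$ (if $j<k$), and zeros otherwise. The nsCRAIG iterates at step $k$ are $y_k=-B_k^{-1}H_k^{-1}(\beta_1e_1)$, $p^{(k)}=Q_ky_k$, $u^{(k)}=-M^{-1}Ap^{(k)}$, with $e_1$ the first unit vector of $\mathbb{R}^k$. *)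

From HB Require Import structures.
From mathcomp Require Import all_boot all_order all_algebra.
Set Implicit Arguments. Unset Strict Implicit. Unset Printing Implicit Defensive.
Import Order.TTheory GRing.Theory Num.Theory.
Local Open Scope ring_scope.

Section NsCRAIG.
Variables (R : rcfType) (m n : nat).
Variables (M : 'M[R]_m) (A : 'M[R]_(m, n)) (C N : 'M[R]_n) (b : 'cV[R]_n).

Definition qform p (G : 'M[R]_p) (x : 'cV[R]_p) : R := (x^T *m G *m x) 0 0.
Definition dotv p (x y : 'cV[R]_p) : R := (x^T *m y) 0 0.
Definition gnorm p (G : 'M[R]_p) (x : 'cV[R]_p) : R := Num.sqrt (qform G x).

(* State of nsCRAIG after step k (k >= 1):
   st_q = [q_1; ...; q_k], st_alpha = [alpha_1; ...; alpha_k],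
   st_beta = [beta_1; ...; beta_k], st_chi = [chi_1; ...; chi_k],
   st_h = [h_1; ...; h_{k-1}] (h_j as the seq of its j entries),
   and the current r_k, v_k, t_k. *)
Record craig_state := CState {
  st_q : seq 'cV[R]_n;
  st_alpha : seq R;
  st_beta : seq R;
  st_chi : seq R;
  st_h : seq (seq R);
  st_r : 'cV[R]_n;
  st_v : 'cV[R]_m;
  st_t : 'cV[R]_n }.

Definition craig_init : craig_state :=
  let beta1 := gnorm (invmx N) b in
  let q1 := beta1^-1 *: (invmx N *m b) in
  let r1 := q1 in
  let w1 := invmx M *m A *m q1 in
  let s1 := C *m r1 in
  let alpha1 := Num.sqrt (qform M w1 + dotv r1 s1) in
  CState [:: q1] [:: alpha1] [:: beta1] [:: beta1 / alpha1] [::]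
         r1 (alpha1^-1 *: w1) (alpha1^-1 *: s1).

Definition craig_ghat (s : craig_state) : 'cV[R]_n :=
  invmx N *m (A^T *m st_v s + st_t s).

Definition craig_step (s : craig_state) : craig_state :=
  let gh := craig_ghat s in
  let h := [seq (q^T *m N *m gh) 0 0 | q <- st_q s] in
  let g := gh - \sum_(i < size (st_q s)) nth 0 h i *: nth 0 (st_q s) i in
  let beta' := gnorm N g in
  let q' := beta'^-1 *: g in
  let alphak := last 0 (st_alpha s) in
  let w' := invmx M *m A *m q' - beta' *: st_v s in
  let r' := q' - (beta' / alphak) *: st_r s in
  let s' := C *m r' in
  let alpha' := Num.sqrt (qform M w' + dotv r' s') in
  CState (rcons (st_q s) q') (rcons (st_alpha s) alpha')
         (rcons (st_beta s) beta')
         (rcons (st_chi s) (- (beta' / alpha') * last 0 (st_chi s)))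
         (rcons (st_h s) h) r' (alpha'^-1 *: w') (alpha'^-1 *: s').

(* the state after step k, for k >= 1 *)
Definition craig_st (k : nat) : craig_state := iter k.-1 craig_step craig_init.

(* h_1, ..., h_k (h_k computed at step k from v_k, t_k) *)
Definition craig_hs (k : nat) : seq (seq R) :=
  let s := craig_st k in
  rcons (st_h s) [seq (q^T *m N *m craig_ghat s) 0 0 | q <- st_q s].

(* alpha_{i+1}, beta_{i+1} with 0-based index i *)
Definition alpha_ (k i : nat) : R := nth 0 (st_alpha (craig_st k)) i.
Definition beta_ (k i : nat) : R := nth 0 (st_beta (craig_st k)) i.

Definition craigQ (k : nat) : 'M[R]_(n, k) :=
  \matrix_(i < n, j < k) (nth 0 (st_q (craig_st k)) j) i 0.

(* B_k: upper bidiagonal, (B_k)_{ii} = alpha_i, (B_k)_{i,i+1} = beta_{i+1}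
   (1-based); in 0-based indices entry (i, i+1) is beta_{i+2}. *)
Definition craigB (k : nat) : 'M[R]_k :=
  \matrix_(i < k, j < k)
    if i == j :> nat then alpha_ k i
    else if j == i.+1 :> nat then beta_ k j else 0.

(* H_k: upper Hessenberg, column j holds h_j above/on the diagonal and
   beta_{j+1} just below it (1-based). *)
Definition craigH (k : nat) : 'M[R]_k :=
  \matrix_(i < k, j < k)
    if (i <= j)%N then nth 0 (nth [::] (craig_hs k) j) i
    else if i == j.+1 :> nat then beta_ k i else 0.

Definition craig_y (k : nat) : 'cV[R]_k :=
  - (invmx (craigB k) *m invmx (craigH k)
       *m \col_(i < k) (if i == 0 :> nat then beta_ k 0 else 0)).

Definition craig_p (k : nat) : 'cV[R]_n := craigQ k *m craig_y k.
Definition craig_u (k : nat) : 'cV[R]_m := - (invmx M *m A *m craig_p k).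

Definition schurS : 'M[R]_n := A^T *m invmx M *m A + C.

(* Rows spanning K_k = span{N^{-1}b, (N^{-1}S)N^{-1}b, ..., (N^{-1}S)^{k-1}N^{-1}b} *)
Definition krylov (k : nat) : 'M[R]_(k, n) :=
  \matrix_(i < k) ((invmx N *m schurS) ^+ i *m (invmx N *m b))^T.

End NsCRAIG.

(* The q_i are N-orthonormal: q_{i+1} is the normalised N-Gram-Schmidt
   residual of ghat_i.  Unwinding w_i = M^{-1}A r_i and s_i = C r_i gives
   alpha_i^2 = r_i^T S r_i and S r_i = alpha_i N ghat_i, whence, from
   q_{j+1} = r_{j+1} + (beta_{j+1}/alpha_j) r_j,
       N^{-1} S q_j = alpha_j ghat_j + beta_j ghat_{j-1},
   i.e. Q_k^T S Q_k = H_k B_k with (H_k)_{ij} = <q_i, ghat_j>_N.  As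
   x^T S x = (M^{-1}Ax)^T M (M^{-1}Ax) + x^T C x > 0 for x <> 0, the matrix
   Q_k^T S Q_k is nonsingular, hence so are H_k and B_k, and with
   Q_k^T b = beta_1 e_1 the iterate p^(k) = Q_k y_k satisfies the Galerkin
   condition Q_k^T (-b - S p^(k)) = 0.  The same relation shows inductively
   that q_1, ..., q_k lie in K_k, so by orthonormality they span it; the
   Galerkin solution in K_k is unique because S is positive definite. *)

From Pilot Require Import Defs.
From HB Require Import structures.
From mathcomp Require Import all_boot all_order all_algebra.
Import Order.TTheory GRing.Theory Num.Theory.
Local Open Scope ring_scope.
Set Implicit Arguments. Unset Strict Implicit. Unset Printing Implicit Defensive.

Lemma sumr_delta (R : pzRingType) k (F : nat -> R) l : (l < k)%N ->
  \sum_(j < k) F j * (l == j)%:R = F l.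
Proof.
move=> lt_lk; rewrite (eq_bigr (fun j : 'I_k => if j == l :> nat then F j else 0)).
  by rewrite -big_mkcond big_ord1_eq lt_lk.
by move=> j _; rewrite eq_sym; case: eqP => [->|_]; rewrite ?mulr1 ?mulr0.
Qed.

Lemma mulmx_entry_rowcol (R : pzRingType) p q r (X : 'M[R]_(p, q)) (Y : 'M[R]_(q, r)) i j :
  (X *m Y) i j = (row i X *m col j Y) 0 0.
Proof. by rewrite !mxE; apply: eq_bigr => l _; rewrite !mxE. Qed.

Lemma trmx_mulmx_entry (R : pzRingType) p q r
    (X : 'M[R]_(p, q)) (P : 'M[R]_p) (Y : 'M[R]_(p, r)) i j :
  (X^T *m P *m Y) i j = ((col i X)^T *m P *m col j Y) 0 0.
Proof. by rewrite mulmx_entry_rowcol row_mul tr_col. Qed.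

Lemma mulmx_bidiag (R : pzRingType) k (X : 'M[R]_k.+1) (a c : nat -> R) (i j : 'I_k.+1) :
  (X *m \matrix_(l < k.+1, l' < k.+1)
     (if l == l' :> nat then a l else if l' == l.+1 :> nat then c l' else 0)) i j
  = X i j * a j + if val j is j'.+1 then X i (inord j') * c j else 0.
Proof.
rewrite mxE (bigD1 j) //= mxE eqxx; congr (_ + _).
case: j => [[|j'] lt_jk] /=.
  rewrite big1 // => l l_neq0; rewrite mxE.
  have -> : (l == 0 :> nat) = false.
    by apply/negbTE; apply: contra l_neq0 => /eqP l0; apply/eqP/val_inj.
  by rewrite mulr0.
have lt_j'k : (j' < k.+1)%N := ltnW lt_jk.
rewrite (bigD1 (inord j')) /=; last first.
  by apply/eqP => /(congr1 val) /=; rewrite inordK // => /n_Sn.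
rewrite mxE inordK // eqn_leq ltnn andbF eqxx big1 ?addr0 // => l /andP [l_neq l_neq'].
rewrite mxE.
have -> : (l == j'.+1 :> nat) = false.
  by apply/negbTE; apply: contra l_neq => /eqP lj; apply/eqP/val_inj.
have -> : (j'.+1 == l.+1 :> nat) = false.
  rewrite eqSS; apply/negbTE; apply: contra l_neq' => /eqP jl.
  by apply/eqP/val_inj; rewrite /= inordK.
by rewrite mulr0.
Qed.

Section RowSpaces.
Variable F : fieldType.

Lemma trmx_addmx_sub p n (X : 'M[F]_(p, n)) (x y : 'cV[F]_n) :
  (x^T <= X)%MS -> (y^T <= X)%MS -> ((x + y)^T <= X)%MS.
Proof. by move=> xX yX; rewrite linearD addmx_sub. Qed.

Lemma trmx_scalemx_sub p n (X : 'M[F]_(p, n)) c (x : 'cV[F]_n) :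
  (x^T <= X)%MS -> ((c *: x)^T <= X)%MS.
Proof. by move=> xX; rewrite linearZ scalemx_sub. Qed.

Lemma trmx_subrmx_sub p n (X : 'M[F]_(p, n)) (x y : 'cV[F]_n) :
  (x^T <= X)%MS -> (y^T <= X)%MS -> ((x - y)^T <= X)%MS.
Proof. by move=> xX yX; rewrite -scaleN1r trmx_addmx_sub ?trmx_scalemx_sub. Qed.

Lemma trmx_summx_sub p n (X : 'M[F]_(p, n)) k (G : 'I_k -> 'cV[F]_n) :
  (forall l, ((G l)^T <= X)%MS) -> ((\sum_(l < k) G l)^T <= X)%MS.
Proof. by move=> GX; rewrite linear_sum; apply: summx_sub => l _; apply: GX. Qed.

Lemma trmx_orth_sub n k (Q : 'M[F]_(n, k)) (r x : 'cV[F]_n) :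
  Q^T *m r = 0 -> (x^T <= Q^T)%MS -> r^T *m x = 0.
Proof.
move=> Qr0 /submxP [D xD].
rewrite -[x]trmxK xD trmx_mul trmxK mulmxA.
have -> : r^T *m Q = (Q^T *m r)^T by rewrite trmx_mul trmxK.
by rewrite Qr0 trmx0 mul0mx.
Qed.

Lemma row_free_submx_sym k n (X Y : 'M[F]_(k, n)) :
  row_free X -> (X <= Y)%MS -> (Y <= X)%MS.
Proof.
move=> X_free XY; have [_ <-] := mxrank_leqif_sup XY.
by rewrite (eqnP X_free) eqn_leq rank_leq_row -{1}(eqnP X_free) mxrankS.
Qed.

End RowSpaces.

Section QuadraticForms.
Variable R : rcfType.

Lemma dotv_qform p (P : 'M[R]_p) x : dotv x (P *m x) = qform P x.
Proof. by rewrite /dotv /qform mulmxA. Qed.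

Lemma qform_tr p (P : 'M[R]_p) x : qform P x = ((P *m x)^T *m x) 0 0.
Proof. by rewrite /qform -[LHS]trace_mx11 -mxtrace_tr !trmx_mul trmxK mulmxA trace_mx11. Qed.

Lemma qform_conj p q (P : 'M[R]_p) (Q : 'M[R]_(p, q)) z :
  qform (Q^T *m P *m Q) z = qform P (Q *m z).
Proof. by rewrite /qform trmx_mul !mulmxA. Qed.

Lemma unitmx_qform_gt0 p (P : 'M[R]_p) :
  (forall z : 'cV[R]_p, z != 0 -> 0 < qform P z) -> P \in unitmx.
Proof.
move=> P_pos; rewrite unitmxE unitfE; apply/negP => /det0P [v v0 vP].
by have := P_pos v^T; rewrite trmx_eq0 v0 /qform trmxK vP mul0mx mxE ltxx => /(_ isT).
Qed.

Lemma sqrtr_normalize (x : R) : Num.sqrt x != 0 ->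
  (Num.sqrt x)^-1 * ((Num.sqrt x)^-1 * x) = 1.
Proof.
move=> sx_neq0; have x_ge0 : 0 <= x.
  by rewrite leNgt; apply: contra sx_neq0 => /ltW; rewrite -sqrtr_eq0.
by rewrite -{3}(sqr_sqrtr x_ge0) mulrA -invfM -expr2 mulVf // expf_eq0.
Qed.

Lemma galerkin_unique n k (S : 'M[R]_n) (f : 'cV[R]_n) (V : 'M[R]_(k, n)) p p' :
  (forall x : 'cV[R]_n, x != 0 -> 0 < qform S x) ->
  (p^T <= V)%MS -> (p'^T <= V)%MS ->
  (forall x : 'cV[R]_n, (x^T <= V)%MS -> (f - S *m p)^T *m x = 0) ->
  (forall x : 'cV[R]_n, (x^T <= V)%MS -> (f - S *m p')^T *m x = 0) -> p' = p.
Proof.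
move=> S_pos pV p'V orth orth'; apply/eqP; rewrite -subr_eq0; apply/negPn/negP.
set d := p' - p => d_neq0.
have dV : (d^T <= V)%MS by exact: trmx_subrmx_sub.
have Sd : S *m d = (f - S *m p) - (f - S *m p').
  by rewrite mulmxBr opprB [RHS]addrC addrA subrK.
clearbody d; have := S_pos _ d_neq0.
by rewrite qform_tr Sd linearB /= mulmxBl orth ?orth' // subrr mxE ltxx.
Qed.

End QuadraticForms.

Section RconsChain.
Variables (T : Type) (F : nat -> seq T).
Hypothesis F_rcons : forall i, exists x, F i.+1 = rcons (F i) x.

Lemma size_rcons_chain i : size (F i) = (size (F 0) + i)%N.
Proof.
elim: i => [|i IH]; first by rewrite addn0.
by have [x ->] := F_rcons i; rewrite size_rcons IH addnS.
Qed.

Lemma nth_rcons_chain x0 i j l :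
  (i <= j)%N -> (l < size (F i))%N -> nth x0 (F j) l = nth x0 (F i) l.
Proof.
move=> /subnK <- lt_l; elim: (j - i)%N => // d IH.
have [x ->] := F_rcons (d + i); rewrite nth_rcons size_rcons_chain.
by rewrite (leq_trans lt_l) ?IH // size_rcons_chain addnCA leq_addl.
Qed.

End RconsChain.

Section Krylov.
Variables (R : rcfType) (m n : nat).
Variables (M : 'M[R]_m) (A : 'M[R]_(m, n)) (C N : 'M[R]_n) (b : 'cV[R]_n).

Local Notation K := (krylov M A C N b).
Local Notation T := (invmx N *m schurS M A C).

Lemma krylov_row j (i : 'I_j) : row i (K j) = (T ^+ i *m (invmx N *m b))^T.
Proof. exact: rowK. Qed.

Lemma krylov_mono j j' : (j <= j')%N -> (K j <= K j')%MS.
Proof.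
move=> le_jj'; apply/row_subP => i.
by rewrite krylov_row -(krylov_row (widen_ord le_jj' i)) row_sub.
Qed.

Lemma krylov_Ninvb : ((invmx N *m b)^T <= K 1)%MS.
Proof. by have := row_sub ord0 (K 1); rewrite krylov_row expr0 mul1mx. Qed.

Lemma krylov_mulT j (x : 'cV[R]_n) : (x^T <= K j)%MS -> ((T *m x)^T <= K j.+1)%MS.
Proof.
move=> /submxP [D xD]; rewrite trmx_mul xD -mulmxA; apply: submx_trans (submxMl _ _) _.
apply/row_subP => i; rewrite row_mul krylov_row -trmx_mul (mulmxA T).
have -> : T *m T ^+ i = T ^+ i.+1 by rewrite exprS mulmxE.
by rewrite -(krylov_row (lift ord0 i)) row_sub.
Qed.

End Krylov.

Section Recurrence.
Variables (R : rcfType) (m n : nat).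
Variables (M : 'M[R]_m) (A : 'M[R]_(m, n)) (C N : 'M[R]_n) (b : 'cV[R]_n).

Definition state i := iter i (craig_step M A C N) (craig_init M A C N b).

(* Indices are shifted by one from the paper: [q_ i], [alpha i], [beta i],
   [r_ i], ... are q_{i+1}, alpha_{i+1}, beta_{i+1}, r_{i+1}, ..., and
   [state i] is the state after step i+1, i.e. [craig_st (i.+1)]. *)
Definition q_ i := nth 0 (st_q (state i)) i.
Definition alpha i := nth 0 (st_alpha (state i)) i.
Definition beta i := nth 0 (st_beta (state i)) i.
Definition r_ i := st_r (state i).
Definition v_ i := st_v (state i).
Definition t_ i := st_t (state i).
Definition ghat i := craig_ghat A N (state i).
Definition hcol i := [seq (q^T *m N *m ghat i) 0 0 | q <- st_q (state i)].

Definition dotN (x y : 'cV[R]_n) := (x^T *m N *m y) 0 0.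
Definition g_ i := ghat i - \sum_(l < i.+1) dotN (q_ l) (ghat i) *: q_ l.
Definition MiA := invmx M *m A.

Lemma stateS i : state i.+1 = craig_step M A C N (state i).
Proof. by rewrite /state iterS. Qed.

Lemma nth_state T (x0 : T) (F : craig_state R m n -> seq T) i j l :
  (forall s, exists x, F (craig_step M A C N s) = rcons (F s) x) ->
  (j <= i)%N -> (l < size (F (state j)))%N ->
  nth x0 (F (state i)) l = nth x0 (F (state j)) l.
Proof. by move=> F_step; apply: (nth_rcons_chain (fun l => F_step (state l))). Qed.

Lemma size_state T (F : craig_state R m n -> seq T) i :
  (forall s, exists x, F (craig_step M A C N s) = rcons (F s) x) ->
  size (F (state i)) = (size (F (state 0)) + i)%N.
Proof. by move=> F_step; apply: (size_rcons_chain (fun l => F_step (state l))). Qed.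

Lemma step_rcons_q s : exists x, st_q (craig_step M A C N s) = rcons (st_q s) x.
Proof. by eexists. Qed.
Lemma step_rcons_alpha s :
  exists x, st_alpha (craig_step M A C N s) = rcons (st_alpha s) x.
Proof. by eexists. Qed.
Lemma step_rcons_beta s :
  exists x, st_beta (craig_step M A C N s) = rcons (st_beta s) x.
Proof. by eexists. Qed.
Lemma step_rcons_h s : exists x, st_h (craig_step M A C N s) = rcons (st_h s) x.
Proof. by eexists. Qed.

Lemma size_q i : size (st_q (state i)) = i.+1.
Proof. by rewrite (size_state _ step_rcons_q). Qed.
Lemma size_alpha i : size (st_alpha (state i)) = i.+1.
Proof. by rewrite (size_state _ step_rcons_alpha). Qed.
Lemma size_beta i : size (st_beta (state i)) = i.+1.
Proof. by rewrite (size_state _ step_rcons_beta). Qed.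
Lemma size_h i : size (st_h (state i)) = i.
Proof. by rewrite (size_state _ step_rcons_h). Qed.

Lemma nth_q i j : (j <= i)%N -> nth 0 (st_q (state i)) j = q_ j.
Proof. by move=> le_ji; rewrite (nth_state _ step_rcons_q le_ji) ?size_q. Qed.

Lemma nth_alpha i j : (j <= i)%N -> nth 0 (st_alpha (state i)) j = alpha j.
Proof. by move=> le_ji; rewrite (nth_state _ step_rcons_alpha le_ji) ?size_alpha. Qed.

Lemma nth_beta i j : (j <= i)%N -> nth 0 (st_beta (state i)) j = beta j.
Proof. by move=> le_ji; rewrite (nth_state _ step_rcons_beta le_ji) ?size_beta. Qed.

Lemma nth_h i j : (j < i)%N -> nth [::] (st_h (state i)) j = hcol j.
Proof.
move=> lt_ji; rewrite (nth_state _ step_rcons_h lt_ji) ?size_h //.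
by rewrite stateS /= nth_rcons size_h ltnn eqxx.
Qed.

Lemma nth_hcol i l : (l <= i)%N -> nth 0 (hcol i) l = dotN (q_ l) (ghat i).
Proof. by move=> le_li; rewrite (nth_map 0) ?size_q // nth_q. Qed.

Lemma step_g i :
  craig_ghat A N (state i) - \sum_(l < size (st_q (state i)))
     nth 0 [seq (q^T *m N *m craig_ghat A N (state i)) 0 0 | q <- st_q (state i)] l
       *: nth 0 (st_q (state i)) l = g_ i.
Proof.
rewrite size_q /g_; congr (_ - _); apply: eq_bigr => l _.
by rewrite nth_hcol ?nth_q // -ltnS.
Qed.

Lemma last_alpha i : last 0 (st_alpha (state i)) = alpha i.
Proof. by rewrite -nth_last size_alpha nth_alpha. Qed.

Lemma beta_S i : beta i.+1 = Defs.gnorm N (g_ i).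
Proof. by rewrite /beta stateS /= step_g nth_rcons size_beta ltnn eqxx. Qed.

Lemma q_S i : q_ i.+1 = (beta i.+1)^-1 *: g_ i.
Proof. by rewrite beta_S /q_ stateS /= step_g nth_rcons size_q ltnn eqxx. Qed.

Lemma r_S i : r_ i.+1 = q_ i.+1 - (beta i.+1 / alpha i) *: r_ i.
Proof. by rewrite q_S beta_S /r_ stateS /= step_g last_alpha. Qed.

Lemma alpha_S i : alpha i.+1 =
  Num.sqrt (qform M (MiA *m q_ i.+1 - beta i.+1 *: v_ i) + dotv (r_ i.+1) (C *m r_ i.+1)).
Proof.
by rewrite r_S q_S beta_S /alpha stateS /= step_g last_alpha nth_rcons size_alpha ltnn eqxx.
Qed.

Lemma v_S i : v_ i.+1 = (alpha i.+1)^-1 *: (MiA *m q_ i.+1 - beta i.+1 *: v_ i).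
Proof. by rewrite alpha_S r_S q_S beta_S /v_ stateS /= step_g last_alpha. Qed.

Lemma t_S i : t_ i.+1 = (alpha i.+1)^-1 *: (C *m r_ i.+1).
Proof. by rewrite alpha_S r_S q_S beta_S /t_ stateS /= step_g last_alpha. Qed.

Lemma MiA_r_S i :
  MiA *m r_ i.+1 = MiA *m q_ i.+1 - (beta i.+1 / alpha i) *: (MiA *m r_ i).
Proof. by rewrite r_S mulmxBr -scalemxAr. Qed.

Lemma v_E i : v_ i = (alpha i)^-1 *: (MiA *m r_ i).
Proof.
elim: i => [//|i IH].
by rewrite v_S MiA_r_S IH scalerA.
Qed.

Lemma alpha_E i : alpha i = Num.sqrt (qform M (MiA *m r_ i) + qform C (r_ i)).
Proof.
case: i => [|i]; first by rewrite /alpha /= dotv_qform.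
by rewrite alpha_S v_E scalerA -MiA_r_S dotv_qform.
Qed.

Lemma t_E i : t_ i = (alpha i)^-1 *: (C *m r_ i).
Proof. by case: i => [//|i]; rewrite t_S. Qed.

Lemma dotNDr x y z : dotN x (y + z) = dotN x y + dotN x z.
Proof. by rewrite /dotN mulmxDr mxE. Qed.
Lemma dotNZr x c y : dotN x (c *: y) = c * dotN x y.
Proof. by rewrite /dotN -scalemxAr mxE. Qed.
Lemma dotNBr x y z : dotN x (y - z) = dotN x y - dotN x z.
Proof. by rewrite /dotN mulmxBr !mxE. Qed.
Lemma dotN0r x : dotN x 0 = 0.
Proof. by rewrite /dotN mulmx0 mxE. Qed.
Lemma dotN_sumr x k (F : 'I_k -> 'cV[R]_n) :
  dotN x (\sum_(l < k) F l) = \sum_(l < k) dotN x (F l).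
Proof. by rewrite /dotN mulmx_sumr summxE. Qed.

Hypothesis N_sym : N^T = N.
Hypothesis N_pos : forall x : 'cV[R]_n, x != 0 -> 0 < qform N x.

Lemma unitN : N \in unitmx.
Proof. exact: unitmx_qform_gt0. Qed.

Lemma dotNC x y : dotN x y = dotN y x.
Proof. by rewrite /dotN -[LHS]trace_mx11 -mxtrace_tr !trmx_mul trmxK N_sym mulmxA trace_mx11. Qed.

Lemma dotN_eq0 x : dotN x x = 0 -> x = 0.
Proof.
move=> x0; apply/eqP; apply/negPn/negP => /N_pos.
by rewrite /qform -/(dotN x x) x0 ltxx.
Qed.

Lemma dotN_ge0 x : 0 <= dotN x x.
Proof.
have [->|/N_pos/ltW //] := eqVneq x 0.
by rewrite dotN0r.
Qed.

Lemma dotN_normalize x : Defs.gnorm N x != 0 ->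
  dotN ((Defs.gnorm N x)^-1 *: x) ((Defs.gnorm N x)^-1 *: x) = 1.
Proof. by move=> nx; rewrite dotNZr dotNC dotNZr sqrtr_normalize. Qed.

Lemma beta0_E : beta 0 = Defs.gnorm N (invmx N *m b).
Proof.
rewrite /beta /= /Defs.gnorm /qform; congr (Num.sqrt _).
by rewrite trmx_mul trmx_inv N_sym -!mulmxA (mulmxA (invmx N)) mulVmx ?unitN ?mul1mx.
Qed.

Lemma ghat_decomp i :
  ghat i = \sum_(l < i.+1) dotN (q_ l) (ghat i) *: q_ l + beta i.+1 *: q_ i.+1.
Proof.
rewrite q_S scalerA; have [beta0|beta_neq0] := eqVneq (beta i.+1) 0.
  (* [beta i.+1 = 0] forces [g_ i = 0] because N is definite *)
  have g0 : g_ i = 0.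
    apply: dotN_eq0; apply/eqP; rewrite eq_le dotN_ge0 andbT -sqrtr_eq0.
    by apply/eqP; exact: etrans (esym (beta_S i)) beta0.
  by move/eqP: g0; rewrite beta0 mul0r scale0r addr0 subr_eq0 => /eqP.
by rewrite mulfV // scale1r /g_ addrC subrK.
Qed.

Variable k : nat.
Hypothesis b_neq0 : b != 0.
Hypothesis beta_neq0 : forall j, (0 < j <= k)%N -> beta j != 0.

Lemma beta0_neq0 : beta 0 != 0.
Proof.
rewrite beta0_E sqrtr_eq0 -ltNge; apply: N_pos; apply: contra b_neq0 => /eqP Nb0.
by rewrite -(mulKVmx unitN b) Nb0 mulmx0.
Qed.

Lemma q0_normal : dotN (q_ 0) (q_ 0) = 1.
Proof.
have -> : q_ 0 = (beta 0)^-1 *: (invmx N *m b) by [].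
by rewrite beta0_E; apply: dotN_normalize; rewrite -beta0_E beta0_neq0.
Qed.

Lemma dotN_q_g i l : (l <= i)%N ->
  (forall l', (l' <= i)%N -> dotN (q_ l) (q_ l') = (l == l')%:R) ->
  dotN (q_ l) (g_ i) = 0.
Proof.
move=> le_li q_orth; rewrite /g_ dotNBr dotN_sumr.
rewrite (eq_bigr (fun l' : 'I_i.+1 => dotN (q_ l') (ghat i) * (l == l')%:R)).
  by rewrite (sumr_delta (fun j => dotN (q_ j) (ghat i))) ?subrr.
by move=> l' _; rewrite dotNZr q_orth // -ltnS.
Qed.

Lemma orthonormal_q_upto i : (i <= k)%N -> forall l l', (l <= i)%N -> (l' <= i)%N ->
  dotN (q_ l) (q_ l') = (l == l')%:R.
Proof.
elim: i => [_ l l'|i IH lt_ik l l'].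
  by rewrite !leqn0 => /eqP -> /eqP ->; exact: q0_normal.
have {}IH := IH (ltnW lt_ik).
have q_orth l0 : (l0 <= i)%N -> dotN (q_ l0) (q_ i.+1) = 0.
  by move=> le_l0i; rewrite q_S dotNZr (dotN_q_g le_l0i) ?mulr0 // => l1; apply: IH.
have q_norm : dotN (q_ i.+1) (q_ i.+1) = 1.
  have := beta_neq0 (j := i.+1); rewrite lt_ik => /(_ isT).
  by rewrite q_S beta_S; apply: dotN_normalize.
rewrite leq_eqVlt ltnS => /predU1P [->|le_li];
  rewrite leq_eqVlt ltnS => /predU1P [->|le_l'i].
- by rewrite q_norm eqxx.
- by rewrite dotNC q_orth // gtn_eqF.
- by rewrite q_orth // ltn_eqF.
- exact: IH.
Qed.

Lemma dotN_q l l' : (l <= k)%N -> (l' <= k)%N -> dotN (q_ l) (q_ l') = (l == l')%:R.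
Proof. exact: orthonormal_q_upto. Qed.

Lemma dotN_q_r i : (i <= k)%N ->
  dotN (q_ i) (r_ i) = 1 /\ forall l, (i < l <= k)%N -> dotN (q_ l) (r_ i) = 0.
Proof.
elim: i => [le0k|i IH lt_ik].
  have -> : r_ 0 = q_ 0 by [].
  by split=> [|l /andP [lt0l lelk]]; rewrite dotN_q // gtn_eqF.
have [_ {}IH] := IH (ltnW lt_ik).
rewrite r_S; split=> [|l /andP [lt_il le_lk]]; rewrite dotNBr dotNZr.
  by rewrite dotN_q // eqxx IH ?ltnSn // mulr0 subr0.
by rewrite IH ?(ltnW lt_il) ?le_lk // mulr0 subr0 dotN_q ?gtn_eqF // ltnW.
Qed.

Lemma r_neq0 i : (i <= k)%N -> r_ i != 0.
Proof.
move=> le_ik; apply/eqP => r0; have [] := dotN_q_r le_ik.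
by rewrite r0 dotN0r => /eqP; rewrite eq_sym oner_eq0.
Qed.

Lemma dotN_q_ghat i j : (j < i <= k)%N ->
  dotN (q_ i) (ghat j) = if i == j.+1 then beta i else 0.
Proof.
case/andP=> lt_ji le_ik; have lt_jk := leq_trans lt_ji le_ik.
rewrite ghat_decomp dotNDr dotN_sumr big1 ?add0r => [|l _]; last first.
  have lt_li : (l < i)%N := leq_trans (ltn_ord l) lt_ji.
  by rewrite dotNZr dotN_q ?gtn_eqF ?mulr0 // (leq_trans (ltnW lt_li)).
by rewrite dotNZr dotN_q //; case: eqP => [->|_]; rewrite ?mulr1 ?mulr0.
Qed.

Hypothesis M_pos : forall x : 'cV[R]_m, x != 0 -> 0 < qform M x.
Hypothesis A_rank : \rank A = n.
Hypothesis C_psd : forall x : 'cV[R]_n, 0 <= qform C x.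

Lemma M_MiA (x : 'cV[R]_n) : M *m (MiA *m x) = A *m x.
Proof. by rewrite mulmxA mulKVmx //; exact: unitmx_qform_gt0. Qed.

Lemma MiA_neq0 (x : 'cV[R]_n) : x != 0 -> MiA *m x != 0.
Proof.
have A_free : row_free A^T by rewrite /row_free mxrank_tr A_rank.
move=> x_neq0; apply: contra x_neq0 => /eqP MiAx0.
rewrite -trmx_eq0 -(mulmx_free_eq0 _ A_free) -trmx_mul trmx_eq0.
by rewrite -M_MiA MiAx0 mulmx0.
Qed.

Lemma qform_schurS (x : 'cV[R]_n) : qform (schurS M A C) x = qform M (MiA *m x) + qform C x.
Proof.
rewrite {1}/qform /schurS mulmxDr mulmxDl mxE; congr (_ + _).
by rewrite qform_tr M_MiA trmx_mul /MiA !mulmxA.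
Qed.

Lemma schurS_pos (x : 'cV[R]_n) : x != 0 -> 0 < qform (schurS M A C) x.
Proof.
by move=> x_neq0; rewrite qform_schurS ltr_wpDr // M_pos // MiA_neq0.
Qed.

Lemma alpha_neq0 i : (i <= k)%N -> alpha i != 0.
Proof.
by move=> le_ik; rewrite alpha_E -qform_schurS sqrtr_eq0 -ltNge schurS_pos // r_neq0.
Qed.

Lemma S_r i : (i <= k)%N -> schurS M A C *m r_ i = alpha i *: (N *m ghat i).
Proof.
move=> le_ik; have N_ghat : N *m ghat i = A^T *m v_ i + t_ i by rewrite mulKVmx ?unitN.
rewrite N_ghat v_E t_E -scalemxAr -scalerDr scalerA mulfV ?alpha_neq0 // scale1r.
by rewrite /schurS mulmxDl /MiA !mulmxA.
Qed.

Lemma S_q i : (i <= k)%N -> schurS M A C *m q_ i =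
  N *m (alpha i *: ghat i + if i is j.+1 then beta i *: ghat j else 0).
Proof.
case: i => [le0k|j lt_jk].
  by rewrite -[q_ 0]/(r_ 0) S_r // addr0 scalemxAr.
have le_jk := ltnW lt_jk.
have q_r : q_ j.+1 = r_ j.+1 + (beta j.+1 / alpha j) *: r_ j by rewrite r_S subrK.
rewrite q_r mulmxDr -scalemxAr !S_r // scalerA divfK ?alpha_neq0 //.
by rewrite mulmxDr -!scalemxAr.
Qed.

Local Notation Q := (craigQ M A C N b k.+1).
Local Notation H := (craigH M A C N b k.+1).
Local Notation B := (craigB M A C N b k.+1).

Lemma alpha__E j : (j <= k)%N -> alpha_ M A C N b k.+1 j = alpha j.
Proof. exact: nth_alpha. Qed.

Lemma beta__E j : (j <= k)%N -> beta_ M A C N b k.+1 j = beta j.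
Proof. exact: nth_beta. Qed.

Lemma col_Q (j : 'I_k.+1) : col j Q = q_ j.
Proof. by apply/matrixP => a c; rewrite !mxE ord1 nth_q // -ltnS. Qed.

Lemma Q_orthonormal : Q^T *m N *m Q = 1%:M.
Proof.
apply/matrixP => i j; rewrite trmx_mulmx_entry !col_Q [RHS]mxE.
by apply: dotN_q; rewrite -ltnS.
Qed.

Lemma craigH_entry (i j : 'I_k.+1) : H i j = dotN (q_ i) (ghat j).
Proof.
have [le_ik le_jk] : (i <= k)%N /\ (j <= k)%N by rewrite -ltnS ltn_ord -ltnS ltn_ord.
rewrite mxE; case: leqP => [le_ij|lt_ji]; last first.
  by rewrite dotN_q_ghat ?lt_ji //; case: eqP => // _; rewrite beta__E.
have -> : nth [::] (craig_hs M A C N b k.+1) j = hcol j.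
  rewrite /craig_hs nth_rcons size_h.
  by case: ltngtP le_jk => // [lt_jk|->] _; rewrite ?nth_h.
exact: nth_hcol.
Qed.

Lemma projected_schurS : Q^T *m schurS M A C *m Q = H *m B.
Proof.
apply/matrixP => i j; have le_jk : (j <= k)%N by rewrite -ltnS ltn_ord.
rewrite trmx_mulmx_entry !col_Q -mulmxA S_q // mulmxA -[(_ *m _) 0 0]/(dotN _ _).
rewrite (mulmx_bidiag _ (alpha_ M A C N b k.+1) (beta_ M A C N b k.+1)) craigH_entry.
rewrite alpha__E // dotNDr dotNZr mulrC; congr (_ + _).
case: j le_jk => [[|j] lt_jk] le_jk /=; first by rewrite dotN0r.
by rewrite craigH_entry inordK ?beta__E // 1?ltnW // dotNZr mulrC.
Qed.

Lemma craigHB_unit : (H \in unitmx) && (B \in unitmx).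
Proof.
rewrite -unitmx_mul -projected_schurS; apply: unitmx_qform_gt0 => z z_neq0.
rewrite qform_conj schurS_pos //; apply: contra z_neq0 => /eqP Qz0.
by rewrite -(mul1mx z) -Q_orthonormal -mulmxA Qz0 mulmx0.
Qed.

Lemma Qt_b : Q^T *m b = \col_(i < k.+1) (if i == 0 :> nat then beta_ M A C N b k.+1 0 else 0).
Proof.
have b_E : b = N *m (beta 0 *: q_ 0).
  have -> : q_ 0 = (beta 0)^-1 *: (invmx N *m b) by [].
  by rewrite scalerA mulfV ?beta0_neq0 // scale1r mulKVmx ?unitN.
apply/matrixP => i c; have le_ik : (i <= k)%N by rewrite -ltnS ltn_ord.
rewrite ord1 mulmx_entry_rowcol -tr_col col_Q col_id [in LHS]b_E mulmxA.
rewrite -[(_ *m _) 0 0]/(dotN _ _) dotNZr dotN_q // mxE beta__E //.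
by case: eqP; rewrite ?mulr1 ?mulr0.
Qed.

Lemma Q_galerkin : Q^T *m (- b - schurS M A C *m craig_p M A C N b k.+1) = 0.
Proof.
have /andP [H_unit B_unit] := craigHB_unit.
rewrite mulmxBr mulmxN Qt_b /craig_p /craig_y !mulmxN !mulmxA projected_schurS.
by rewrite -(mulmxA H) mulmxV // mulmx1 mulmxV // mul1mx opprK addNr.
Qed.

Local Notation K := (krylov M A C N b).

Lemma q_krylov j : (j <= k)%N -> forall l, (l <= j)%N -> ((q_ l)^T <= K j.+1)%MS.
Proof.
elim: j => [_ l|j IH lt_jk l].
  by rewrite leqn0 => /eqP ->; apply: trmx_scalemx_sub; exact: krylov_Ninvb.
have le_jk := ltnW lt_jk; have {}IH := IH le_jk.
have q_K l' : (l' <= j)%N -> ((q_ l')^T <= K j.+2)%MS.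
  by move=> le_l'j; apply: submx_trans (IH _ le_l'j) (krylov_mono M A C N b (leqnSn _)).
rewrite leq_eqVlt ltnS => /predU1P [->|]; last exact: q_K.
have prev_K : ((if j is j'.+1 then beta j *: ghat j' else 0)^T <= K j.+2)%MS.
  case: (j) q_K => [_|j' q_K]; first by rewrite trmx0 sub0mx.
  apply: trmx_scalemx_sub; rewrite ghat_decomp; apply: trmx_addmx_sub.
    by apply: trmx_summx_sub => l'; apply: trmx_scalemx_sub; apply: q_K; exact: ltnW.
  exact: trmx_scalemx_sub (q_K _ _).
have ghat_K : ((ghat j)^T <= K j.+2)%MS.
  have -> : ghat j = (alpha j)^-1 *: (invmx N *m schurS M A C *m q_ j
                                      - if j is j'.+1 then beta j *: ghat j' else 0).
    by rewrite -mulmxA S_q // mulKmx ?unitN // addrK scalerA mulVf ?alpha_neq0 // scale1r.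
  by apply: trmx_scalemx_sub; apply: trmx_subrmx_sub prev_K; apply: krylov_mulT; apply: IH.
rewrite q_S; apply: trmx_scalemx_sub; apply: trmx_subrmx_sub ghat_K _.
by apply: trmx_summx_sub => l'; apply: trmx_scalemx_sub; apply: q_K; rewrite -ltnS.
Qed.

Lemma Qt_krylov : (Q^T <= K k.+1)%MS.
Proof.
apply/row_subP => j; rewrite -tr_col col_Q.
by apply: q_krylov (leqnn k) _ _; rewrite -ltnS ltn_ord.
Qed.

Lemma krylov_Qt : (K k.+1 <= Q^T)%MS.
Proof.
apply: row_free_submx_sym Qt_krylov.
by apply/row_freeP; exists (N *m Q); rewrite mulmxA Q_orthonormal.
Qed.

Lemma craig_p_krylov : ((craig_p M A C N b k.+1)^T <= K k.+1)%MS.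
Proof. by rewrite /craig_p trmx_mul; apply: submx_trans (submxMl _ _) Qt_krylov. Qed.

Lemma craig_p_galerkin (x : 'cV[R]_n) : (x^T <= K k.+1)%MS ->
  (- b - schurS M A C *m craig_p M A C N b k.+1)^T *m x = 0.
Proof. by move=> xK; apply: trmx_orth_sub Q_galerkin (submx_trans xK krylov_Qt). Qed.

End Recurrence.

Theorem theorem4p1 (R : rcfType) (m n : nat)
    (M : 'M[R]_m) (A : 'M[R]_(m, n)) (C N : 'M[R]_n) (b : 'cV[R]_n)
    (k : nat) :
  (n <= m)%N ->
  (forall x : 'cV[R]_m, x != 0 -> 0 < qform M x) ->
  \rank A = n ->
  C^T = C -> (forall x : 'cV[R]_n, 0 <= qform C x) ->
  b != 0 ->
  N^T = N -> (forall x : 'cV[R]_n, x != 0 -> 0 < qform N x) ->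
  (1 <= k)%N ->
  (forall j : nat, (1 <= j < k)%N -> beta_ M A C N b k j != 0) ->
  let S := schurS M A C in
  let K := krylov M A C N b k in
  let p := craig_p M A C N b k in
  [/\ craigH M A C N b k \in unitmx,
      (p^T <= K)%MS,
      (forall x : 'cV[R]_n, (x^T <= K)%MS -> (- b - S *m p)^T *m x = 0),
      (forall p' : 'cV[R]_n, (p'^T <= K)%MS ->
         (forall x : 'cV[R]_n, (x^T <= K)%MS -> (- b - S *m p')^T *m x = 0) ->
         p' = p)
    & craig_u M A C N b k = - (invmx M *m A *m p)].
Proof.
move=> _ M_pos A_rank _ C_psd b_neq0 N_sym N_pos.
case: k => [//|k] _ beta_k_neq0 S K p.
have beta_neq0 j : (0 < j <= k)%N -> beta M A C N b j != 0.
  by case/andP=> j_gt0 le_jk; rewrite -(nth_beta _ _ _ _ _ le_jk) beta_k_neq0 ?j_gt0.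
have p_K := craig_p_krylov N_sym N_pos b_neq0 beta_neq0 M_pos A_rank C_psd.
have p_galerkin := craig_p_galerkin N_sym N_pos b_neq0 beta_neq0 M_pos A_rank C_psd.
split=> //.
- by case/andP: (craigHB_unit N_sym N_pos b_neq0 beta_neq0 M_pos A_rank C_psd).
- move=> p' p'_K p'_galerkin.
  exact: galerkin_unique (schurS_pos M_pos A_rank C_psd) p_K p'_K p_galerkin p'_galerkin.
Qed.
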